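(* Let $K=\{k_0,k_1,\dots,k_n\}$ be a finite set of social alternatives and $K_*=K\setminus\{k_0\}$. Let $T_1,T_2$ be finite type sets with $\min\{|T_1|,|T_2|\}=2$, let $T=T_1\times T_2$, and let $\lambda$ be a probability measure on $T$ with $\lambda(t)>0$ for all $t\in T$ which is the product of its marginals $\lambda_1$ on $T_1$ and $\lambda_2$ on $T_2$. Let $Q=(Q_1,Q_2)$ with $Q_i:K\times T_i\to\mathbb{R}$ be an interim allocation rule satisfying $\sum_{k\in K}Q_i^k(t_i)=1$ for all $t_i\in T_i$, $i=1,2$ (i.e. $Q_i^{k_0}(t_i)=1-\sum_{k\in K_*}Q_i^k(t_i)$). Then $Q$ is implementable if and only if the following three conditions hold: (a) $\sum_{t_1\in T_1}Q_1^k(t_1)\lambda_1(t_1)-\sum_{t_2\in T_2}Q_2^k(t_2)\lambda_2(t_2)=0$ for all $k\in K_*$; (b) $Q_i^k(t_i)\ge 0$ for all $k\in K_*$, $t_i\in T_i$, $i=1,2$; (c) for all $G\subseteq K_*$, $E_1\subseteq T_1$ and $E_2\subseteq T_2$, $$\sum_{k\in G}\Big[\sum_{t_1\in E_1}Q_1^k(t_1)\lambda_1(t_1)-\sum_{t_2\in E_2}Q_2^k(t_2)\lambda_2(t_2)\Big]\le \lambda\big(E_1\times (T_2\setminus E_2)\big).$$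
   Context: An ex post allocation rule $q:K\times T\to\mathbb{R}$ is feasible if $q\ge 0$ and $\sum_{k\in K}q^k(t)=1$ for all $t\in T$. An interim allocation rule $Q=(Q_1,Q_2)$, $Q_i:K\times T_i\to\mathbb{R}$, is implementable if there exists a feasible ex post allocation rule $q$ with $Q_i^k(t_i)=\sum_{t_{-i}\in T_{-i}}q^k(t)\lambda_{-i}(t_{-i})$ for all $i\in\{1,2\}$, $t_i\in T_i$, $k\in K$ (where $-i$ denotes the other player and $t=(t_i,t_{-i})$). For $E\subseteq T$, $\lambda(E)=\sum_{t\in E}\lambda(t)$. *)

From mathcomp Require Import all_boot all_order all_algebra.
From mathcomp Require Import reals.
Set Implicit Arguments. Unset Strict Implicit. Unset Printing Implicit Defensive.
Import Order.TTheory GRing.Theory Num.Theory.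
Local Open Scope ring_scope.

Section Defs.
Variables (R : realType) (T1 T2 : finType).

Definition marg1 (lam : T1 * T2 -> R) (t1 : T1) : R := \sum_(t2 : T2) lam (t1, t2).
Definition marg2 (lam : T1 * T2 -> R) (t2 : T2) : R := \sum_(t1 : T1) lam (t1, t2).

Definition measT (lam : T1 * T2 -> R) (E : {set T1 * T2}) : R := \sum_(t in E) lam t.

Variable K : finType.

Definition feasible (q : K -> T1 * T2 -> R) : Prop :=
  (forall k t, 0 <= q k t) /\ (forall t, \sum_(k : K) q k t = 1).

Definition implementable (lam : T1 * T2 -> R)
    (Q1 : K -> T1 -> R) (Q2 : K -> T2 -> R) : Prop :=
  exists q : K -> T1 * T2 -> R, feasible q /\
    (forall k t1, Q1 k t1 = \sum_(t2 : T2) q k (t1, t2) * marg2 lam t2) /\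
    (forall k t2, Q2 k t2 = \sum_(t1 : T1) q k (t1, t2) * marg1 lam t1).
End Defs.

From mathcomp Require Import all_boot all_order all_algebra.
From mathcomp Require Import reals.
From mathcomp Require Import ring lra zify.
Import Order.TTheory GRing.Theory Num.Theory.
Set Implicit Arguments. Unset Strict Implicit. Unset Printing Implicit Defensive.
Local Open Scope ring_scope.

(* Necessity is a pointwise computation: writing q for an ex post rule, each
   interim mass difference is a sum of q k t * ([t1 \in E1] - [t2 \in E2]) * lam t,
   and 0 <= \sum_(k in G) q k t <= 1.

   For sufficiency, (a) extends to k0 by summing over K, and then (c) extends to
   every G \subset K by complementing G, E1 and E2 simultaneously. Exchanging the
   players, we may assume T1 = {u, v}. An ex post rule is then the same as a
   splitting of the mass Q2 k t2 * marg2 lam t2 of every pair (k, t2) between the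
   types u and v, where the part of u must have row sums Q1 k u * marg1 lam u and
   column sums lam (u, t2). This is a transportation problem with capacities, and the cut
   conditions of the Gale supply-demand theorem are exactly (c) with E1 = {u}.
   That theorem is proved by induction on the number of nonzero capacities: send
   as much flow as possible along one edge and delete it. *)

Section IndicatorSums.
Variables (R : pzRingType) (T : finType).
Implicit Types (A : {set T}) (F : T -> R).

Lemma sum_indicator A F : \sum_(t in A) F t = \sum_t (t \in A)%:R * F t.
Proof.
by rewrite big_mkcond; apply: eq_bigr => t _; case: (t \in A); rewrite ?mul1r ?mul0r.
Qed.

Lemma sum_delta a F : \sum_t (t == a)%:R * F t = F a.
Proof.
rewrite (bigD1 a) //= eqxx mul1r big1 ?addr0 // => t /negbTE ->.
by rewrite mul0r.
Qed.

Lemma sum_delta1 (a : T) : \sum_t (t == a)%:R = 1 :> R.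
Proof. by rewrite -[RHS](sum_delta a (fun=> 1)); apply: eq_bigr => t _; rewrite mulr1. Qed.

Lemma sum_delta_in A a : \sum_(t in A) (t == a)%:R = (a \in A)%:R :> R.
Proof.
rewrite sum_indicator -(sum_delta a (fun t => (t \in A)%:R)).
by apply: eq_bigr => t _; rewrite -natrM mulnC natrM.
Qed.

Lemma sum_setUI A A' F :
  \sum_(t in A :|: A') F t + \sum_(t in A :&: A') F t
  = \sum_(t in A) F t + \sum_(t in A') F t.
Proof.
rewrite !sum_indicator -!big_split; apply: eq_bigr => t _ /=.
rewrite in_setU in_setI.
by case: (t \in A); case: (t \in A'); rewrite /= ?(mul1r, mul0r, addr0, add0r).
Qed.

Lemma sum_setT F : \sum_(t in [set: T]) F t = \sum_t F t.
Proof. by apply: eq_bigl => t; rewrite inE. Qed.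

Lemma sum_setC A F : \sum_(t in A) F t + \sum_(t in ~: A) F t = \sum_t F t.
Proof.
by rewrite [RHS](bigID [in A]) /=; congr (_ + _); apply: eq_bigl => t; rewrite inE.
Qed.

End IndicatorSums.

Section Transport.
Variables (R : realFieldType) (I J : finType).
Implicit Types (c : I -> J -> R) (al : I -> R) (be : J -> R).
Implicit Types (A : {set I}) (B : {set J}).

Definition cut_slack c al be A B :=
  \sum_(j in B) be j + \sum_(i in A) \sum_(j in ~: B) c i j - \sum_(i in A) al i.

Definition is_transport c al be (y : I -> J -> R) :=
  [/\ forall i j, 0 <= y i j <= c i j, forall i, \sum_j y i j = al i
    & forall j, \sum_i y i j = be j].

Definition cap_support c := [set p : I * J | c p.1 p.2 != 0].

Lemma transport_cap0 c al be : (forall i j, c i j = 0) ->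
  \sum_i al i = \sum_j be j -> (forall A B, 0 <= cut_slack c al be A B) ->
  exists y, is_transport c al be y.
Proof.
move=> c0 sum_eq slack_ge0.
have slack_cap0 A B : cut_slack c al be A B = \sum_(j in B) be j - \sum_(i in A) al i.
  suff : \sum_(i in A) \sum_(j in ~: B) c i j = 0 by rewrite /cut_slack => ->; rewrite addr0.
  by rewrite big1 // => i _; rewrite big1.
have al_le0 i : al i <= 0.
  by have := slack_ge0 [set i] set0; rewrite slack_cap0 big_set0 big_set1; lra.
have be_ge0 j : 0 <= be j.
  by have := slack_ge0 set0 [set j]; rewrite slack_cap0 big_set0 big_set1; lra.
have /psumr_eq0P al0 : \sum_i - al i = 0.
  apply/eqP; rewrite eq_le sumr_ge0 ?andbT => [|i _]; last by rewrite oppr_ge0.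
  by rewrite sumrN sum_eq oppr_le0 sumr_ge0.
have /psumr_eq0P be0 : \sum_j be j = 0.
  apply/eqP; rewrite eq_le sumr_ge0 ?andbT // -sum_eq -oppr_ge0 -sumrN.
  by rewrite sumr_ge0 // => i _; rewrite oppr_ge0.
exists (fun _ _ => 0); split => [i j | i | j]; first by rewrite c0 lexx.
- by rewrite big1 // -[al i]opprK al0 ?oppr0 // => i' _; rewrite oppr_ge0.
- by rewrite big1 // be0.
Qed.

Lemma cut_slack_residual c al be i0 j0 th ce A B :
  cut_slack (fun i j => c i j - ce * ((i == i0)%:R * (j == j0)%:R))
            (fun i => al i - th * (i == i0)%:R) (fun j => be j - th * (j == j0)%:R) A B
  = cut_slack c al be A B - th * (j0 \in B)%:R + th * (i0 \in A)%:R
    - ce * ((i0 \in A)%:R * (j0 \notin B)%:R).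
Proof.
rewrite /cut_slack /= !sumrB -!mulr_sumr !sum_delta_in.
under eq_bigr => i _ do rewrite sumrB -mulr_sumr -mulr_sumr sum_delta_in.
by rewrite sumrB -mulr_sumr -mulr_suml sum_delta_in in_setC; ring.
Qed.

Lemma cut_slack_submod c al be A A' B B' i0 j0 :
  (forall i j, 0 <= c i j) -> i0 \notin A -> j0 \in B -> i0 \in A' -> j0 \notin B' ->
  c i0 j0 + cut_slack c al be (A :|: A') (B :|: B') + cut_slack c al be (A :&: A') (B :&: B')
  <= cut_slack c al be A B + cut_slack c al be A' B'.
Proof.
move=> c_ge0 i0A j0B i0A' j0B'.
have := sum_setUI B B' be; have := sum_setUI A A' al.
suff : c i0 j0 + \sum_(i in A :|: A') \sum_(j in ~: (B :|: B')) c i j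
                + \sum_(i in A :&: A') \sum_(j in ~: (B :&: B')) c i j
       <= \sum_(i in A) \sum_(j in ~: B) c i j + \sum_(i in A') \sum_(j in ~: B') c i j.
  by rewrite /cut_slack; lra.
have -> : c i0 j0 = \sum_i (i == i0)%:R * \sum_j (j == j0)%:R * c i j.
  by rewrite sum_delta sum_delta.
rewrite !sum_indicator -!big_split /=; apply: ler_sum => i _.
rewrite !sum_indicator !mulr_sumr -!big_split /=; apply: ler_sum => j _.
rewrite !inE; have := c_ge0 i j.
have [-> | _] := eqVneq i i0; have [-> | _] := eqVneq j j0;
  rewrite ?(negbTE i0A) ?j0B ?i0A' ?(negbTE j0B') /=;
  by do ?[case: (_ \in _)]; rewrite /=; lra.
Qed.

(* The flow sent along the edge (i0, j0) before the edge is deleted: the least of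
   its capacity and of the slacks of the cuts (A, B) with i0 \notin A and j0 \in B,
   which pushing decreases. By submodularity of the slack, the cuts with i0 \in A
   and j0 \notin B, which lose the capacity c i0 j0, keep a nonnegative slack too. *)
Definition push_amount c al be i0 j0 :=
  \big[Order.min/c i0 j0]_(p : {set I} * {set J} | (i0 \notin p.1) && (j0 \in p.2))
     cut_slack c al be p.1 p.2.

Section PushAlongEdge.
Variables (c : I -> J -> R) (al : I -> R) (be : J -> R) (i0 : I) (j0 : J).
Hypotheses (c_ge0 : forall i j, 0 <= c i j)
           (slack_ge0 : forall A B, 0 <= cut_slack c al be A B).

Let th := push_amount c al be i0 j0.
Let c' i j := c i j - c i0 j0 * ((i == i0)%:R * (j == j0)%:R).
Let al' i := al i - th * (i == i0)%:R.
Let be' j := be j - th * (j == j0)%:R.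

Lemma push_amount_ge0 : 0 <= th.
Proof. by apply: le_bigmin => [|p _]; [exact: c_ge0 | exact: slack_ge0]. Qed.

Lemma push_amount_le_cap : th <= c i0 j0.
Proof. exact: bigmin_le_id. Qed.

Lemma push_amount_le_slack A B : i0 \notin A -> j0 \in B -> th <= cut_slack c al be A B.
Proof.
move=> i0A j0B; apply: (bigmin_le_cond _ (j := (A, B))) => /=.
by rewrite i0A j0B.
Qed.

Lemma cap_sub_slack_le_push_amount A B :
  i0 \in A -> j0 \notin B -> c i0 j0 - cut_slack c al be A B <= th.
Proof.
move=> i0A j0B; apply: le_bigmin => [|[X Y] /andP [/= i0X j0Y]].
  by have := slack_ge0 A B; lra.
have := cut_slack_submod al be c_ge0 i0X j0Y i0A j0B.
by have := slack_ge0 (X :|: A) (Y :|: B); have := slack_ge0 (X :&: A) (Y :&: B); lra.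
Qed.

Lemma residual_slack_ge0 A B : 0 <= cut_slack c' al' be' A B.
Proof.
rewrite cut_slack_residual.
case i0A: (i0 \in A); case j0B: (j0 \in B); rewrite /=.
- by have := slack_ge0 A B; lra.
- by have := cap_sub_slack_le_push_amount i0A (negbT j0B); lra.
- by have := push_amount_le_slack (negbT i0A) j0B; lra.
- by have := slack_ge0 A B; lra.
Qed.

Lemma residual_capE i j : c' i j = if (i, j) == (i0, j0) then 0 else c i j.
Proof.
rewrite /c' xpair_eqE.
have [-> | _] := eqVneq i i0; have [-> | _] := eqVneq j j0;
  by rewrite /= ?mulr1n ?mulr0n ?(mulr1, mulr0, mul0r, subrr, subr0).
Qed.

Lemma residual_cap_ge0 i j : 0 <= c' i j.
Proof. by rewrite residual_capE; case: ifP. Qed.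

Lemma residual_support : c i0 j0 != 0 -> (#|cap_support c'| < #|cap_support c|)%N.
Proof.
move=> cap_ne0; rewrite [X in (_ < X)%N](cardsD1 (i0, j0)) inE /= cap_ne0 add1n ltnS.
apply/subset_leq_card/subsetP => -[i j]; rewrite !inE residual_capE /=.
case: ifP => [_ | ne ->]; first by rewrite eqxx.
by rewrite andbT; apply/negbT.
Qed.

Lemma residual_sum_eq : \sum_i al i = \sum_j be j -> \sum_i al' i = \sum_j be' j.
Proof.
by move=> sum_eq; rewrite !sumrB -!mulr_sumr !sum_delta1 sum_eq.
Qed.

Lemma transport_of_residual y : is_transport c' al' be' y ->
  is_transport c al be (fun i j => y i j + th * ((i == i0)%:R * (j == j0)%:R)).
Proof.
move=> [y_bnd y_row y_col]; split => [i j | i | j].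
- have := y_bnd i j; rewrite residual_capE xpair_eqE.
  have := push_amount_ge0; have := push_amount_le_cap.
  have [-> | _] := eqVneq i i0; have [-> | _] := eqVneq j j0;
    rewrite /= ?mulr1n ?mulr0n ?(mulr1, mulr0, addr0) => ? ? /andP[? ?];
    by apply/andP; split; lra.
- by rewrite big_split /= y_row /al' -mulr_sumr -mulr_sumr sum_delta1 mulr1 subrK.
- by rewrite big_split /= y_col /be' -mulr_sumr -mulr_suml sum_delta1 mul1r subrK.
Qed.

End PushAlongEdge.

Theorem transport_exists c al be :
  (forall i j, 0 <= c i j) -> \sum_i al i = \sum_j be j ->
  (forall A B, 0 <= cut_slack c al be A B) -> exists y, is_transport c al be y.
Proof.
have [n] := ubnP #|cap_support c|; elim: n c al be => // n IH c al be.
move=> supp_lt c_ge0 sum_eq slack_ge0.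
case: (pickP [pred p : I * J | c p.1 p.2 != 0]) => [[i0 j0] | supp0]; last first.
  apply: transport_cap0 => // i j; apply/eqP.
  by have := supp0 (i, j); rewrite /= => /negbFE.
move=> /= cap_ne0.
have [|y ty] := IH _ _ _ _ (residual_cap_ge0 i0 j0 c_ge0) (residual_sum_eq c i0 j0 sum_eq)
  (residual_slack_ge0 i0 j0 c_ge0 slack_ge0).
  exact: leq_trans (residual_support cap_ne0) supp_lt.
exact: ex_intro (transport_of_residual c_ge0 slack_ge0 ty).
Qed.

End Transport.

Section Rectangles.
Variables (R : realType) (T1 T2 : finType) (lam : T1 * T2 -> R).
Implicit Types (A : {set T1}) (B : {set T2}).

Definition lam_swap : T2 * T1 -> R := fun p => lam (p.2, p.1).

Lemma measTX A B :
  measT lam (setX A B) = \sum_(t1 in A) \sum_(t2 in B) lam (t1, t2).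
Proof.
rewrite /measT pair_big_dep /=; apply: eq_big => [[t1 t2] | [t1 t2] _] //=.
by rewrite in_setX.
Qed.

Lemma sum_marg1 A B :
  \sum_(t1 in A) marg1 lam t1 = measT lam (setX A B) + measT lam (setX A (~: B)).
Proof.
by rewrite !measTX -big_split; apply: eq_bigr => t1 _ /=; rewrite sum_setC.
Qed.

End Rectangles.

Lemma measT_swap (R : realType) (T1 T2 : finType) (lam : T1 * T2 -> R)
    (A : {set T1}) (B : {set T2}) :
  measT (lam_swap lam) (setX B A) = measT lam (setX A B).
Proof. by rewrite !measTX [LHS]exchange_big. Qed.

Lemma sum_marg2 (R : realType) (T1 T2 : finType) (lam : T1 * T2 -> R)
    (A : {set T1}) (B : {set T2}) :
  \sum_(t2 in B) marg2 lam t2 = measT lam (setX A B) + measT lam (setX (~: A) B).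
Proof. by rewrite (sum_marg1 (lam_swap lam) B A) !measT_swap. Qed.

Section Interim.
Variables (R : realType) (K T1 T2 : finType).
Variables (lam : T1 * T2 -> R) (Q1 : K -> T1 -> R) (Q2 : K -> T2 -> R).
Implicit Types (k : K) (G : {set K}) (A : {set T1}) (B : {set T2}).

Definition mass1 k A := \sum_(t1 in A) Q1 k t1 * marg1 lam t1.
Definition mass2 k B := \sum_(t2 in B) Q2 k t2 * marg2 lam t2.
Definition cut_excess G A B := \sum_(k in G) (mass1 k A - mass2 k B).
Definition cut_condition G :=
  forall A B, cut_excess G A B <= measT lam (setX A (~: B)).
Definition balanced := forall k, mass1 k setT = mass2 k setT.

Lemma mass_diff_compl k A B : mass1 k setT = mass2 k setT ->
  mass1 k A - mass2 k B = - (mass1 k (~: A) - mass2 k (~: B)).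
Proof.
rewrite /mass1 /mass2 !sum_setT -(sum_setC A) -(sum_setC B) => ?; lra.
Qed.

Hypotheses (Q1_sum1 : forall t1, \sum_k Q1 k t1 = 1) (Q2_sum1 : forall t2, \sum_k Q2 k t2 = 1).

Lemma sum_mass_diff A B :
  \sum_k (mass1 k A - mass2 k B)
  = \sum_(t1 in A) marg1 lam t1 - \sum_(t2 in B) marg2 lam t2.
Proof.
rewrite sumrB /mass1 /mass2 exchange_big [X in _ - X]exchange_big /=.
by congr (_ - _); apply: eq_bigr => t _; rewrite -mulr_suml ?Q1_sum1 ?Q2_sum1 mul1r.
Qed.

Lemma balanced_except (k0 : K) :
  (forall k, k != k0 -> mass1 k setT = mass2 k setT) -> balanced.
Proof.
move=> bal_off k; have [-> | /bal_off //] := eqVneq k k0; apply/eqP; rewrite -subr_eq0.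
have := sum_mass_diff setT setT; rewrite (bigD1 k0) //= big1 => [|k1 /bal_off ->]; last first.
  by rewrite subrr.
by rewrite addr0 => ->; rewrite /marg1 /marg2 !sum_setT exchange_big subrr.
Qed.

Lemma Q2_ge0_of_cut k t2 : cut_condition [set k] -> 0 < marg2 lam t2 -> 0 <= Q2 k t2.
Proof.
move=> cut_k marg_gt0; have := cut_k set0 [set t2].
rewrite /cut_excess /mass1 /mass2 measTX !big_set1 !big_set0 sub0r oppr_le0.
by rewrite pmulr_lge0.
Qed.

Hypothesis bal : balanced.

Lemma cut_condition_compl G : cut_condition (~: G) -> cut_condition G.
Proof.
move=> cut_compl A B.
have split : cut_excess G A B + cut_excess (~: G) A B
              = \sum_(t1 in A) marg1 lam t1 - \sum_(t2 in B) marg2 lam t2.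
  by rewrite /cut_excess sum_setC sum_mass_diff.
have flip : cut_excess (~: G) A B = - cut_excess (~: G) (~: A) (~: B).
  by rewrite /cut_excess -sumrN; apply: eq_bigr => k _; rewrite mass_diff_compl.
have := cut_compl (~: A) (~: B); rewrite setCK.
by have := sum_marg1 lam A B; have := sum_marg2 lam A B; lra.
Qed.

Lemma cut_condition_except (k0 : K) :
  (forall G, G \subset [set~ k0] -> cut_condition G) -> forall G, cut_condition G.
Proof.
move=> cut_off G; have [k0G | k0G] := boolP (k0 \in G).
  apply/cut_condition_compl/cut_off/subsetP => k; rewrite !inE.
  by apply: contra => /eqP ->.
apply/cut_off/subsetP => k kG; rewrite !inE.
by apply: contraNneq k0G => <-.
Qed.

End Interim.

Section Swap.
Variables (R : realType) (K T1 T2 : finType).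
Variables (lam : T1 * T2 -> R) (Q1 : K -> T1 -> R) (Q2 : K -> T2 -> R).
Hypothesis bal : balanced lam Q1 Q2.

Lemma balanced_swap : balanced (lam_swap lam) Q2 Q1.
Proof. by move=> k; apply: esym (bal k). Qed.

Lemma cut_condition_swap G :
  cut_condition lam Q1 Q2 G -> cut_condition (lam_swap lam) Q2 Q1 G.
Proof.
move=> cut_G B A; rewrite measT_swap.
suff -> : cut_excess (lam_swap lam) Q2 Q1 G B A = cut_excess lam Q1 Q2 G (~: A) (~: B).
  by have := cut_G (~: A) (~: B); rewrite setCK.
apply: eq_bigr => k _.
by rewrite [RHS]mass_diff_compl ?setCK ?bal // opprB.
Qed.

Lemma Q1_ge0_of_cut k t1 :
  cut_condition lam Q1 Q2 [set k] -> 0 < marg1 lam t1 -> 0 <= Q1 k t1.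
Proof. by move/cut_condition_swap; apply: Q2_ge0_of_cut. Qed.

End Swap.

Section Necessity.
Variables (R : realType) (K T1 T2 : finType).
Variables (lam : T1 * T2 -> R) (Q1 : K -> T1 -> R) (Q2 : K -> T2 -> R).
Hypotheses (lam_ge0 : forall t, 0 <= lam t)
           (lam_prod : forall t1 t2, lam (t1, t2) = marg1 lam t1 * marg2 lam t2).

Lemma mass_diff_of_alloc (q : K -> T1 * T2 -> R) k (A : {set T1}) (B : {set T2}) :
  (forall k t1, Q1 k t1 = \sum_t2 q k (t1, t2) * marg2 lam t2) ->
  (forall k t2, Q2 k t2 = \sum_t1 q k (t1, t2) * marg1 lam t1) ->
  mass1 lam Q1 k A - mass2 lam Q2 k B
  = \sum_t1 \sum_t2 q k (t1, t2) * ((t1 \in A)%:R - (t2 \in B)%:R) * lam (t1, t2).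
Proof.
move=> Q1_q Q2_q; rewrite /mass1 /mass2 !sum_indicator.
under eq_bigr => t1 _ do rewrite Q1_q mulr_suml mulr_sumr.
under [X in _ - X]eq_bigr => t2 _ do rewrite Q2_q mulr_suml mulr_sumr.
rewrite [X in _ - X]exchange_big /= -sumrB; apply: eq_bigr => t1 _.
by rewrite -sumrB; apply: eq_bigr => t2 _; rewrite lam_prod; ring.
Qed.

Lemma implementable_balanced : implementable lam Q1 Q2 -> balanced lam Q1 Q2.
Proof.
move=> [q [_ [Q1_q Q2_q]]] k; apply/eqP.
rewrite -subr_eq0 (mass_diff_of_alloc _ _ _ Q1_q Q2_q).
by rewrite big1 // => t1 _; rewrite big1 // => t2 _; rewrite !inE subrr mulr0 mul0r.
Qed.

Lemma implementable_cut_condition G :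
  implementable lam Q1 Q2 -> cut_condition lam Q1 Q2 G.
Proof.
move=> [q [[q_ge0 q_sum1] [Q1_q Q2_q]]] A B.
rewrite /cut_excess; under eq_bigr => k _ do rewrite (mass_diff_of_alloc _ _ _ Q1_q Q2_q).
have -> : measT lam (setX A (~: B))
          = \sum_t1 \sum_t2 (t1 \in A)%:R * ((t2 \in ~: B)%:R * lam (t1, t2)).
  by rewrite measTX sum_indicator; apply: eq_bigr => t1 _; rewrite sum_indicator mulr_sumr.
rewrite exchange_big; apply: ler_sum => t1 _; rewrite exchange_big; apply: ler_sum => t2 _.
rewrite -!mulr_suml; set s := \sum_(k in G) _.
have s_ge0 : 0 <= s by apply: sumr_ge0 => k _; apply: q_ge0.
have s_le1 : s <= 1.
  rewrite -(q_sum1 (t1, t2)) -(sum_setC G) lerDl.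
  by apply: sumr_ge0 => k _; apply: q_ge0.
have := lam_ge0 (t1, t2); rewrite inE.
by case: (t1 \in A); case: (t2 \in B); rewrite /=; nra.
Qed.

End Necessity.

Lemma marg1_gt0 (R : realType) (T1 T2 : finType) (lam : T1 * T2 -> R) t1 :
  (0 < #|T2|)%N -> (forall t, 0 < lam t) -> 0 < marg1 lam t1.
Proof.
move=> /card_gt0P [w _] lam_gt0; rewrite /marg1 (bigD1 w) //=.
have : 0 <= \sum_(t2 | t2 != w) lam (t1, t2) by apply: sumr_ge0 => t2 _; apply: ltW.
by have := lam_gt0 (t1, w); lra.
Qed.

Lemma marg2_gt0 (R : realType) (T1 T2 : finType) (lam : T1 * T2 -> R) t2 :
  (0 < #|T1|)%N -> (forall t, 0 < lam t) -> 0 < marg2 lam t2.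
Proof.
move=> T1_gt0 lam_gt0; change (0 < marg1 (lam_swap lam) t2).
by apply: marg1_gt0 T1_gt0 _ => t; apply: lam_gt0.
Qed.

Section Sufficiency.
Variables (R : realType) (K T1 T2 : finType).
Variables (lam : T1 * T2 -> R) (Q1 : K -> T1 -> R) (Q2 : K -> T2 -> R).
Hypotheses (T1_gt0 : (0 < #|T1|)%N) (T2_gt0 : (0 < #|T2|)%N) (lam_gt0 : forall t, 0 < lam t)
           (lam_prod : forall t1 t2, lam (t1, t2) = marg1 lam t1 * marg2 lam t2).

(* [x k t1 t2] stands for [q k (t1, t2) * lam (t1, t2)]. *)
Lemma implementable_of_mass (x : K -> T1 -> T2 -> R) :
  (forall k t1 t2, 0 <= x k t1 t2) ->
  (forall t1 t2, \sum_k x k t1 t2 = lam (t1, t2)) ->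
  (forall k t1, \sum_t2 x k t1 t2 = Q1 k t1 * marg1 lam t1) ->
  (forall k t2, \sum_t1 x k t1 t2 = Q2 k t2 * marg2 lam t2) ->
  implementable lam Q1 Q2.
Proof.
move=> x_ge0 x_sumK x_sum2 x_sum1.
have m1_ne0 t1 : marg1 lam t1 != 0 by rewrite gt_eqF ?marg1_gt0.
have m2_ne0 t2 : marg2 lam t2 != 0 by rewrite gt_eqF ?marg2_gt0.
exists (fun k t => x k t.1 t.2 / lam t); split; [split | split].
- by move=> k t; rewrite divr_ge0 // ltW.
- by move=> [t1 t2]; rewrite -mulr_suml x_sumK mulfV // gt_eqF.
- move=> k t1; apply: (mulIf (m1_ne0 t1)); rewrite -x_sum2 mulr_suml.
  by apply: eq_bigr => t2 _; rewrite lam_prod /=; field; rewrite m1_ne0 m2_ne0.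
- move=> k t2; apply: (mulIf (m2_ne0 t2)); rewrite -x_sum1 mulr_suml.
  by apply: eq_bigr => t1 _; rewrite lam_prod /=; field; rewrite m1_ne0 m2_ne0.
Qed.

End Sufficiency.

Section TwoTypes.
Variables (R : realType) (K T1 T2 : finType).
Variables (lam : T1 * T2 -> R) (Q1 : K -> T1 -> R) (Q2 : K -> T2 -> R) (u v : T1).
Hypotheses (u_neq_v : u != v) (T1_uv : forall t1, (t1 == u) || (t1 == v))
           (T2_gt0 : (0 < #|T2|)%N) (lam_gt0 : forall t, 0 < lam t)
           (lam_prod : forall t1 t2, lam (t1, t2) = marg1 lam t1 * marg2 lam t2)
           (Q1_sum1 : forall t1, \sum_k Q1 k t1 = 1) (Q2_sum1 : forall t2, \sum_k Q2 k t2 = 1)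
           (bal : balanced lam Q1 Q2) (cut : forall G, cut_condition lam Q1 Q2 G).

Let T1_gt0 : (0 < #|T1|)%N. Proof. by apply/card_gt0P; exists u. Qed.

Lemma sum_T1 (F : T1 -> R) : \sum_t1 F t1 = F u + F v.
Proof.
rewrite (bigD1 u) //= (bigD1 v) 1?eq_sym //= big1 ?addr0 // => t /andP [t_u t_v].
by have := T1_uv t; rewrite (negbTE t_u) (negbTE t_v).
Qed.

Let v_neq_u : (v == u) = false. Proof. by rewrite eq_sym (negbTE u_neq_v). Qed.

Let other_type t1 : t1 != u -> t1 = v.
Proof. by move=> t1_u; have := T1_uv t1; rewrite (negbTE t1_u) => /eqP. Qed.

Let marg2_pos t2 : 0 < marg2 lam t2. Proof. exact: marg2_gt0. Qed.

Let cap k t2 := Q2 k t2 * marg2 lam t2.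
Let supply k := Q1 k u * marg1 lam u.
Let demand t2 := lam (u, t2).

Lemma two_types_transport : exists y, is_transport cap supply demand y.
Proof.
apply: transport_exists => [k t2 | | G B].
- apply: mulr_ge0; last exact: ltW.
  exact: (Q2_ge0_of_cut (cut _)).
- by rewrite -mulr_suml Q1_sum1 mul1r.
- have := cut G [set u] (~: B); rewrite setCK measTX big_set1 /cut_excess /mass1 /mass2.
  under eq_bigr => k _ do rewrite big_set1.
  by rewrite /cut_slack /cap /supply /demand sumrB; lra.
Qed.

Lemma implementable_two_types : implementable lam Q1 Q2.
Proof.
have [y [y_bnd y_row y_col]] := two_types_transport.
apply: (implementable_of_mass T1_gt0 T2_gt0 lam_gt0 lam_prod
  (x := fun k t1 t2 => if t1 == u then y k t2 else cap k t2 - y k t2)).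
- move=> k t1 t2; have /andP [y_ge0 y_le] := y_bnd k t2.
  by case: ifP; rewrite ?subr_ge0.
- move=> t1 t2; have [-> | /other_type ->] := eqVneq t1 u; rewrite ?eqxx ?v_neq_u.
    exact: y_col.
  by rewrite sumrB y_col -mulr_suml Q2_sum1 mul1r {1}/marg2 sum_T1 addrC addKr.
- move=> k t1; have [-> | /other_type ->] := eqVneq t1 u; rewrite ?eqxx ?v_neq_u.
    exact: y_row.
  have := bal k; rewrite /mass1 /mass2 !sum_setT sum_T1 => mass_k.
  by rewrite sumrB y_row /cap -mass_k /supply addrC addKr.
- by move=> k t2; rewrite sum_T1 eqxx v_neq_u addrC subrK.
Qed.

End TwoTypes.

Lemma implementable_swap (R : realType) (K T1 T2 : finType) (lam : T1 * T2 -> R)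
    (Q1 : K -> T1 -> R) (Q2 : K -> T2 -> R) :
  implementable (lam_swap lam) Q2 Q1 -> implementable lam Q1 Q2.
Proof.
move=> [q [[q_ge0 q_sum1] [Q2_q Q1_q]]].
by exists (fun k t => q k (t.2, t.1)); split; [split | split] => [k t | t | k t | k t].
Qed.

Lemma card2_elems (T : finType) :
  #|T| = 2 -> exists u v : T, u != v /\ forall t, (t == u) || (t == v).
Proof.
rewrite cardE; case E: (enum T) => [|u [|v [|? ?]]] // _; exists u, v; split.
  by have := enum_uniq T; rewrite E /= inE andbT.
by move=> t; have := mem_enum T t; rewrite E !inE ?orbF.
Qed.

Theorem theorem1 (R : realType) (K : finType) (k0 : K) (T1 T2 : finType)
  (lam : T1 * T2 -> R) (Q1 : K -> T1 -> R) (Q2 : K -> T2 -> R) :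
  minn #|T1| #|T2| = 2%N ->
  (forall t, 0 < lam t) ->
  \sum_(t : T1 * T2) lam t = 1 ->
  (forall t1 t2, lam (t1, t2) = marg1 lam t1 * marg2 lam t2) ->
  (forall t1, \sum_(k : K) Q1 k t1 = 1) ->
  (forall t2, \sum_(k : K) Q2 k t2 = 1) ->
  (implementable lam Q1 Q2 <->
   [/\ (forall k, k != k0 ->
          \sum_(t1 : T1) Q1 k t1 * marg1 lam t1
          - \sum_(t2 : T2) Q2 k t2 * marg2 lam t2 = 0),
       (forall k, k != k0 ->
          (forall t1, 0 <= Q1 k t1) /\ (forall t2, 0 <= Q2 k t2)) &
       (forall (G : {set K}) (E1 : {set T1}) (E2 : {set T2}),
          G \subset [set~ k0] ->
          \sum_(k in G) (\sum_(t1 in E1) Q1 k t1 * marg1 lam t1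
                          - \sum_(t2 in E2) Q2 k t2 * marg2 lam t2)
          <= measT lam (setX E1 (~: E2)))]).
Proof.
move=> card_min lam_gt0 _ lam_prod Q1_sum1 Q2_sum1.
have [T1_gt0 T2_gt0] : (0 < #|T1|)%N /\ (0 < #|T2|)%N by split; lia.
have massE k : mass1 lam Q1 k setT - mass2 lam Q2 k setT
               = \sum_t1 Q1 k t1 * marg1 lam t1 - \sum_t2 Q2 k t2 * marg2 lam t2.
  by rewrite /mass1 /mass2 !sum_setT.
split=> [impl | [bal_off _ cut_off]].
  have bal := implementable_balanced lam_prod impl.
  have cut G := implementable_cut_condition (fun t => ltW (lam_gt0 t)) lam_prod G impl.
  split=> [k _ | k _ | G E1 E2 _]; last exact: cut.
    by rewrite -massE bal subrr.
  split=> t; [apply: (Q1_ge0_of_cut bal (cut _)) | apply: (Q2_ge0_of_cut (cut _))].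
    exact: marg1_gt0.
  exact: marg2_gt0.
have bal : balanced lam Q1 Q2.
  apply: (balanced_except Q1_sum1 Q2_sum1 (k0 := k0)) => k /bal_off.
  by rewrite -massE => /subr0_eq.
have cut := cut_condition_except Q1_sum1 Q2_sum1 bal (fun G sub A B => cut_off G A B sub).
have [T1_2 | T2_2] : #|T1| = 2 \/ #|T2| = 2 by lia.
  have [u [v [u_neq_v T1_uv]]] := card2_elems T1_2.
  exact: implementable_two_types u_neq_v T1_uv T2_gt0 lam_gt0 lam_prod Q1_sum1 Q2_sum1 bal cut.
have [u [v [u_neq_v T2_uv]]] := card2_elems T2_2.
apply/implementable_swap/(implementable_two_types u_neq_v T2_uv T1_gt0) => //.
- by move=> t; apply: lam_gt0.
- by move=> t2 t1; rewrite /lam_swap /= lam_prod mulrC.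
- exact: balanced_swap.
- by move=> G; apply: cut_condition_swap.
Qed.
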